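(* Let $(H,G,\alpha,f)$ be a normalized crossed system and let $H\times G$ denote the direct product of groups. There is a bijection between the set of group homomorphisms $\psi:H\#_\alpha^f G\to H\times G$ and the set of quadruples $(s,u,r,v)$, where $s:H\to G$ and $u:H\to H$ are group homomorphisms and $r:G\to H$, $v:G\to G$ are maps, satisfying for all $g,g_1,g_2\in G$, $h\in H$: $$v(g_1)v(g_2)=s(f(g_1,g_2))v(g_1g_2),\quad r(g)u(h)=u(g\triangleright h)r(g),$$ $$r(g_1)r(g_2)=u(f(g_1,g_2))r(g_1g_2),\quad v(g)s(h)=s(g\triangleright h)v(g).$$ Under this bijection $\psi(h,g)=\big(u(h)r(g),\ s(h)v(g)\big)$.
   Context: For groups $H,G$ and a map $\alpha:G\to\mathrm{Aut}(H)$ write $g\triangleright h:=\alpha(g)(h)$. A normalized crossed system is a quadruple $(H,G,\alpha,f)$ with maps $\alpha:G\to\mathrm{Aut}(H)$, $f:G\times G\to H$, $f(1,1)=1$, such that for all $g_1,g_2,g_3\in G$, $h\in H$: (WA) $g_1\triangleright(g_2\triangleright h)=f(g_1,g_2)\big((g_1g_2)\triangleright h\big)f(g_1,g_2)^{-1}$ and (CC) $f(g_1,g_2)f(g_1g_2,g_3)=\big(g_1\triangleright f(g_2,g_3)\big)f(g_1,g_2g_3)$. The crossed product $H\#_\alpha^f G$ is the group on the set $H\times G$ with multiplication $(h_1,g_1)\cdot(h_2,g_2)=\big(h_1(g_1\triangleright h_2)f(g_1,g_2),g_1g_2\big)$ and unit $(1,1)$. *)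

(* MathComp boot only (for ssrfun's `bijective`); groups are arbitrary
   (possibly infinite), so they are given as an explicit record of operations
   and axioms. *)
From mathcomp Require Import ssreflect ssrfun ssrbool.
Set Implicit Arguments. Unset Strict Implicit. Unset Printing Implicit Defensive.

Record group := Group {
  carrier :> Type;
  gmul : carrier -> carrier -> carrier;
  gone : carrier;
  ginv : carrier -> carrier;
  gmulA : forall x y z, gmul x (gmul y z) = gmul (gmul x y) z;
  gmul1l : forall x, gmul gone x = x;
  gmul1r : forall x, gmul x gone = x;
  gmulVl : forall x, gmul (ginv x) x = gone;
  gmulVr : forall x, gmul x (ginv x) = gone
}.
Arguments gmul {g}.
Arguments gone {g}.
Arguments ginv {g}.

(* Group homomorphism (multiplicative map; unit preservation follows). *)
Definition is_hom (A B : group) (phi : A -> B) : Prop :=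
  forall x y, phi (gmul x y) = gmul (phi x) (phi y).

Definition is_aut (A : group) (a : A -> A) : Prop := is_hom a /\ bijective a.

(* Normalized crossed system (H, G, alpha, f); g |> h := alpha g h. *)
Definition normalized_crossed_system (H G : group)
    (alpha : G -> H -> H) (f : G -> G -> H) : Prop :=
  [/\ forall g, is_aut (alpha g),
      f gone gone = gone,
      forall g1 g2 h, alpha g1 (alpha g2 h)
        = gmul (gmul (f g1 g2) (alpha (gmul g1 g2) h)) (ginv (f g1 g2)) &
      forall g1 g2 g3, gmul (f g1 g2) (f (gmul g1 g2) g3)
        = gmul (alpha g1 (f g2 g3)) (f g1 (gmul g2 g3))].

Definition cp_mul (H G : group) (alpha : G -> H -> H) (f : G -> G -> H)
    (x y : H * G) : H * G :=
  (gmul (gmul x.1 (alpha x.2 y.1)) (f x.2 y.2), gmul x.2 y.2).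

Definition dp_mul (H G : group) (x y : H * G) : H * G :=
  (gmul x.1 y.1, gmul x.2 y.2).

Definition is_cp_hom (H G : group) (alpha : G -> H -> H) (f : G -> G -> H)
    (psi : H * G -> H * G) : Prop :=
  forall x y, psi (cp_mul alpha f x y) = dp_mul (psi x) (psi y).

Definition CPHom (H G : group) (alpha : G -> H -> H) (f : G -> G -> H) :=
  {psi : H * G -> H * G | is_cp_hom alpha f psi}.

Record quad (H G : group) := Quad {
  qs : H -> G; qu : H -> H; qr : G -> H; qv : G -> G }.

Definition good_quad (H G : group) (alpha : G -> H -> H) (f : G -> G -> H)
    (q : quad H G) : Prop :=
  let: Quad s u r v := q in
  is_hom s /\ is_hom u /\
  [/\ forall g1 g2, gmul (v g1) (v g2) = gmul (s (f g1 g2)) (v (gmul g1 g2)),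
      forall g h, gmul (r g) (u h) = gmul (u (alpha g h)) (r g),
      forall g1 g2, gmul (r g1) (r g2) = gmul (u (f g1 g2)) (r (gmul g1 g2)) &
      forall g h, gmul (v g) (s h) = gmul (s (alpha g h)) (v g)].

Definition GoodQuad (H G : group) (alpha : G -> H -> H) (f : G -> G -> H) :=
  {q : quad H G | good_quad alpha f q}.

(* Since H x G is a direct product, a map psi into it is a homomorphism
   iff both of its components are; so everything reduces to describing
   homomorphisms phi : H #_alpha^f G -> K into an arbitrary group K.
   Such a phi is determined by a := phi(-, 1) and b := phi(1, -), because
   (h, g) = (h, 1)(1, g) in the crossed product, and the homomorphism
   property is equivalent to (a, b) being a "twisted pair": a is a
   homomorphism, b g a h = a (g |> h) b g, and
   b g1 b g2 = a (f g1 g2) b (g1 g2).  Conversely every twisted pair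
   defines the homomorphism (h, g) |-> a h b g.
   A good quadruple (s, u, r, v) is exactly two twisted pairs, (u, r)
   and (s, v); the bijection of the theorem sends it to the pairing of the
   two associated homomorphisms, and its inverse reads the quadruple off
   psi(-, 1) and psi(1, -). *)
From mathcomp Require Import ssreflect ssrfun ssrbool.
From Stdlib Require Import ProofIrrelevance FunctionalExtensionality.

Section GroupFacts.
Variable A : group.

Lemma mulIg (x y z : A) : gmul x y = gmul x z -> y = z.
Proof.
move=> E; have := f_equal (gmul (ginv x)) E.
by rewrite !gmulA gmulVl !gmul1l.
Qed.

Lemma idem1 (x : A) : gmul x x = x -> x = gone.
Proof. by move=> E; apply: (@mulIg x); rewrite gmul1r. Qed.

End GroupFacts.

Lemma hom1 {A B : group} {phi : A -> B} : is_hom phi -> phi gone = gone.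
Proof. by move=> Hphi; apply: idem1; rewrite -Hphi gmul1l. Qed.

Lemma val_inj_sig (T : Type) (P : T -> Prop) (x y : {a : T | P a}) :
  proj1_sig x = proj1_sig y -> x = y.
Proof. by apply: eq_sig_hprop => a; apply: proof_irrelevance. Qed.

Section CrossedProduct.
Context {H G : group} {alpha : G -> H -> H} {f : G -> G -> H}.

Section Normalization.
Hypothesis Hcs : normalized_crossed_system alpha f.

(* (WA) at g1 = g2 = 1 says alpha 1 is idempotent; being invertible, it is
   the identity. *)
Lemma alpha1h h : alpha gone h = h.
Proof.
case: Hcs => Haut f11 WA _; case: (Haut gone) => _ [alpha1_inv K1 _].
have := WA gone gone h.
rewrite f11 !gmul1l -(gmul1l (ginv gone)) gmulVr gmul1r => E.
by rewrite -{2}(K1 h) -E K1.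
Qed.

Lemma alphag1 g : alpha g gone = gone.
Proof. by case: Hcs => Haut _ _ _; case: (Haut g) => Hhom _; exact: hom1 Hhom. Qed.

Lemma f1g g : f gone g = gone.
Proof.
case: Hcs => _ f11 _ CC; apply: idem1.
by have := CC gone gone g; rewrite alpha1h !gmul1l f11 gmul1l => <-.
Qed.

Lemma fg1 g : f g gone = gone.
Proof.
case: Hcs => _ f11 _ CC; apply: idem1.
by have := CC g gone gone; rewrite !gmul1r f11 alphag1 gmul1l.
Qed.

Lemma cp_mul_split h g : cp_mul alpha f (h, gone) (gone, g) = (h, g).
Proof. by rewrite /cp_mul /= alphag1 f1g !gmul1r gmul1l. Qed.

Lemma cp_mul_HH h1 h2 :
  cp_mul alpha f (h1, gone) (h2, gone) = (gmul h1 h2, gone).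
Proof. by rewrite /cp_mul /= alpha1h f1g !gmul1r. Qed.

Lemma cp_mul_GG g1 g2 :
  cp_mul alpha f (gone, g1) (gone, g2)
  = cp_mul alpha f (f g1 g2, gone) (gone, gmul g1 g2).
Proof. by rewrite cp_mul_split /cp_mul /= alphag1 !gmul1l. Qed.

Lemma cp_mul_GH g h :
  cp_mul alpha f (gone, g) (h, gone)
  = cp_mul alpha f (alpha g h, gone) (gone, g).
Proof. by rewrite cp_mul_split /cp_mul /= fg1 gmul1l !gmul1r. Qed.

End Normalization.

Section IntoAGroup.
Context {K : group}.

Definition is_cp_hom_to (phi : H * G -> K) : Prop :=
  forall x y, phi (cp_mul alpha f x y) = gmul (phi x) (phi y).

Definition twisted_pair (a : H -> K) (b : G -> K) : Prop :=
  [/\ is_hom a,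
      forall g h, gmul (b g) (a h) = gmul (a (alpha g h)) (b g) &
      forall g1 g2, gmul (b g1) (b g2) = gmul (a (f g1 g2)) (b (gmul g1 g2))].

Lemma twisted_pair_hom a b :
  twisted_pair a b -> is_cp_hom_to (fun x => gmul (a x.1) (b x.2)).
Proof.
case=> Ha Hba Hbb [h1 g1] [h2 g2]; rewrite /cp_mul /= !Ha.
rewrite -!gmulA; congr (gmul (a h1) _).
by rewrite (gmulA (b g1)) Hba -!gmulA Hbb.
Qed.

Lemma twisted_pair_b1 a b :
  f gone gone = gone -> twisted_pair a b -> b gone = gone.
Proof.
move=> f11 [Ha _ Hbb]; apply: idem1.
by rewrite Hbb f11 (hom1 Ha) gmul1l gmul1r.
Qed.

Hypothesis Hcs : normalized_crossed_system alpha f.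

Lemma cp_hom_split phi h g :
  is_cp_hom_to phi -> phi (h, g) = gmul (phi (h, gone)) (phi (gone, g)).
Proof. by move=> Hphi; rewrite -Hphi cp_mul_split. Qed.

Lemma cp_hom_twisted_pair phi :
  is_cp_hom_to phi ->
  twisted_pair (fun h => phi (h, gone)) (fun g => phi (gone, g)).
Proof.
move=> Hphi; split=> [h1 h2 | g h | g1 g2] /=.
- by rewrite -Hphi cp_mul_HH.
- by rewrite -!Hphi cp_mul_GH.
- by rewrite -!Hphi cp_mul_GG.
Qed.

End IntoAGroup.

Lemma is_cp_homP (psi : H * G -> H * G) :
  is_cp_hom alpha f psi <->
  is_cp_hom_to (fun x => (psi x).1) /\ is_cp_hom_to (fun x => (psi x).2).
Proof.
split=> [Hpsi | [H1 H2] x y].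
- by split=> x y; rewrite Hpsi.
- by rewrite /dp_mul -H1 -H2; case: (psi _).
Qed.

Lemma good_quadP (q : quad H G) :
  good_quad alpha f q <-> twisted_pair (qu q) (qr q) /\ twisted_pair (qs q) (qv q).
Proof.
case: q => s u r v /=; split.
- by case=> Hs [Hu [Ev Eru Er Evs]]; split; split.
- by case=> [[Hu Eru Er] [Hs Evs Ev]]; do 2 split=> //.
Qed.

Definition psi_of (q : quad H G) (x : H * G) : H * G :=
  (gmul (qu q x.1) (qr q x.2), gmul (qs q x.1) (qv q x.2)).

Definition quad_of (psi : H * G -> H * G) : quad H G :=
  Quad (fun h => (psi (h, gone)).2) (fun h => (psi (h, gone)).1)
       (fun g => (psi (gone, g)).1) (fun g => (psi (gone, g)).2).

Lemma psi_of_hom q : good_quad alpha f q -> is_cp_hom alpha f (psi_of q).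
Proof.
by case/good_quadP=> Hur Hsv; apply/is_cp_homP; split; apply: twisted_pair_hom.
Qed.

Section Correspondence.
Hypothesis Hcs : normalized_crossed_system alpha f.

Lemma quad_of_good psi : is_cp_hom alpha f psi -> good_quad alpha f (quad_of psi).
Proof.
move=> /is_cp_homP [H1 H2]; apply/good_quadP; split.
- exact: cp_hom_twisted_pair Hcs _ H1.
- exact: cp_hom_twisted_pair Hcs _ H2.
Qed.

Lemma quad_of_psi_of q : good_quad alpha f q -> quad_of (psi_of q) = q.
Proof.
have [_ f11 _ _] := Hcs; case/good_quadP=> Hur Hsv.
have r1 := twisted_pair_b1 _ _ f11 Hur; have v1 := twisted_pair_b1 _ _ f11 Hsv.
case: Hur Hsv => [/hom1 u1 _ _] [/hom1 s1 _ _].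
case: q u1 r1 s1 v1 => s u r v /= u1 r1 s1 v1.
rewrite /quad_of /psi_of /=.
congr Quad; apply: functional_extensionality => x /=;
  by rewrite ?u1 ?r1 ?s1 ?v1 ?gmul1l ?gmul1r.
Qed.

Lemma psi_of_quad_of psi : is_cp_hom alpha f psi -> psi_of (quad_of psi) = psi.
Proof.
move=> /is_cp_homP [H1 H2]; apply: functional_extensionality => -[h g].
rewrite /psi_of /= -(cp_hom_split Hcs _ h g H1) -(cp_hom_split Hcs _ h g H2).
by case: (psi _).
Qed.

End Correspondence.

End CrossedProduct.

Theorem corollary2p6 (H G : group) (alpha : G -> H -> H) (f : G -> G -> H)
    (Hcs : normalized_crossed_system alpha f) :
  exists Phi : GoodQuad alpha f -> CPHom alpha f,
    bijective Phi /\
    forall (q : GoodQuad alpha f) (h : H) (g : G),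
      proj1_sig (Phi q) (h, g)
        = (gmul (qu (proj1_sig q) h) (qr (proj1_sig q) g),
           gmul (qs (proj1_sig q) h) (qv (proj1_sig q) g)).
Proof.
pose Phi (q : GoodQuad alpha f) : CPHom alpha f :=
  exist _ (psi_of (proj1_sig q)) (psi_of_hom _ (proj2_sig q)).
pose Psi (p : CPHom alpha f) : GoodQuad alpha f :=
  exist _ (quad_of (proj1_sig p)) (quad_of_good Hcs _ (proj2_sig p)).
exists Phi; split=> //; exists Psi.
- by case=> q Hq; apply: val_inj_sig; exact: quad_of_psi_of Hcs q Hq.
- by case=> p Hp; apply: val_inj_sig; exact: psi_of_quad_of Hcs p Hp.
Qed.
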